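(* Every discrete loss $\ell:\mathcal{R}\to\mathbb{R}^{\mathcal{Y}}_+$ is embedded by some polyhedral loss $L:\mathbb{R}^d\to\mathbb{R}^{\mathcal{Y}}_+$ (for some $d$).
   Context: $\mathcal{Y}$ is a finite set of labels; $\mathbb{R}^{\mathcal{Y}}_+$ is the nonnegative orthant; $\Delta_{\mathcal{Y}}$ is the probability simplex on $\mathcal{Y}$. A loss is a map $L:\mathcal{R}\to\mathbb{R}^{\mathcal{Y}}_+$; expected loss under $p$ is $\langle p,L(r)\rangle$. A loss is discrete if $\mathcal{R}$ is finite. $L:\mathbb{R}^d\to\mathbb{R}^{\mathcal{Y}}_+$ is polyhedral if each coordinate $u\mapsto L(u)_y$ is a pointwise maximum of finitely many affine functions. $L$ is minimizable if $\inf_r\langle p,L(r)\rangle$ is attained for all $p$; then $\mathrm{prop}[L](p)=\arg\min_r\langle p,L(r)\rangle$. $\mathcal{S}\subseteq\mathcal{R}$ is representative for minimizable $L$ if $\mathrm{prop}[L](p)\cap\mathcal{S}\neq\emptyset$ for all $p\in\Delta_{\mathcal{Y}}$. A minimizable $L:\mathbb{R}^d\to\mathbb{R}^{\mathcal{Y}}_+$ embeds $\ell$ if there exist a representative set $\mathcal{S}$ for $\ell$ and an injective $\varphi:\mathcal{S}\to\mathbb{R}^d$ with (i) $L(\varphi(r))=\ell(r)$ for all $r\in\mathcal{S}$ and (ii) for all $p$ and $r\in\mathcal{S}$: $r\in\mathrm{prop}[\ell](p)\iff\varphi(r)\in\mathrm{prop}[L](p)$. *)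

From HB Require Import structures.
From mathcomp Require Import all_boot all_order all_algebra.
From mathcomp Require Import reals.
Set Implicit Arguments. Unset Strict Implicit. Unset Printing Implicit Defensive.
Import Order.TTheory GRing.Theory Num.Theory.
Local Open Scope ring_scope.

Section Defs.
Variable R : realType.
Variable Y : finType.

Definition simplex (p : Y -> R) : Prop :=
  (forall y, 0 <= p y) /\ \sum_(y : Y) p y = 1.

Definition exp_loss (Rep : Type) (L : Rep -> Y -> R) (p : Y -> R) (r : Rep) : R :=
  \sum_(y : Y) p y * L r y.

Definition nonneg_loss (Rep : Type) (L : Rep -> Y -> R) : Prop :=
  forall r y, 0 <= L r y.

Definition minimizable (Rep : Type) (L : Rep -> Y -> R) : Prop :=
  forall p, simplex p -> exists r, forall r', exp_loss L p r <= exp_loss L p r'.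

Definition prop (Rep : Type) (L : Rep -> Y -> R) (p : Y -> R) (r : Rep) : Prop :=
  forall r', exp_loss L p r <= exp_loss L p r'.

Definition representative (Rep : Type) (L : Rep -> Y -> R) (S : Rep -> Prop) : Prop :=
  forall p, simplex p -> exists r, S r /\ prop L p r.

(* L : R^d -> R^Y is polyhedral: each coordinate is a pointwise maximum of
   finitely many (at least one) affine functions u |-> <a_i, u> + b_i *)
Definition polyhedral (d : nat) (L : 'rV[R]_d -> Y -> R) : Prop :=
  forall y, exists (n : nat) (a : 'I_n.+1 -> 'rV[R]_d) (b : 'I_n.+1 -> R),
    forall u : 'rV[R]_d,
      (forall i, \sum_(j < d) a i 0 j * u 0 j + b i <= L u y) /\
      (exists i, L u y = \sum_(j < d) a i 0 j * u 0 j + b i).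

Definition embeds (d : nat) (L : 'rV[R]_d -> Y -> R) (Rep : Type) (l : Rep -> Y -> R)
  : Prop :=
  minimizable L /\
  exists (S : Rep -> Prop) (phi : Rep -> 'rV[R]_d),
    representative l S /\
    (forall r1 r2, S r1 -> S r2 -> phi r1 = phi r2 -> r1 = r2) /\
    (forall r, S r -> L (phi r) = l r) /\
    (forall p r, simplex p -> S r -> (prop l p r <-> prop L p (phi r))).
End Defs.

(** Index the discrete predictions by 'I_d and embed prediction j as the unit
    vector e_j of R^d.  On R^d take the loss that is linear in u, with value
    sum_j u_j l(j) on the simplex, plus M times a polyhedral penalty
    sum_j (|u_j| - u_j) + |1 - sum_j u_j| that vanishes exactly on the
    simplex, where M bounds all values of l.  Because M dominates every
    expected loss, leaving the simplex never pays, and on the simplex the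
    expected loss is a convex combination of the discrete expected losses;
    hence the minimizers of the discrete loss map to minimizers of the
    surrogate.  Absolute values of affine maps are maxima of two affine
    maps, so the surrogate is polyhedral. *)

From HB Require Import structures.
From mathcomp Require Import all_boot all_order all_algebra.
From mathcomp Require Import reals.
From mathcomp Require Import ring lra.
From Stdlib Require Import FunctionalExtensionality.
Set Implicit Arguments. Unset Strict Implicit. Unset Printing Implicit Defensive.
Import Order.TTheory GRing.Theory Num.Theory.
Local Open Scope ring_scope.

Section MaxAffine.
Variables (R : realType) (d : nat).
Implicit Types (F G : 'rV[R]_d -> R) (a : 'rV[R]_d) (b c : R) (u : 'rV[R]_d).

Definition affine a b u : R := \sum_(j < d) a 0 j * u 0 j + b.

Definition max_affine F : Prop :=
  exists (K : finType) (A : K -> 'rV[R]_d) (B : K -> R),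
    forall u, (forall k, affine (A k) (B k) u <= F u) /\
              exists k, F u = affine (A k) (B k) u.

Lemma affineD a1 b1 a2 b2 u :
  affine a1 b1 u + affine a2 b2 u = affine (a1 + a2) (b1 + b2) u.
Proof.
rewrite /affine addrACA -big_split /=; congr (_ + _).
by apply: eq_bigr => j _; rewrite mxE mulrDl.
Qed.

Lemma affineZ c a b u : c * affine a b u = affine (c *: a) (c * b) u.
Proof.
rewrite /affine mulrDr mulr_sumr; congr (_ + _).
by apply: eq_bigr => j _; rewrite mxE mulrA.
Qed.

Lemma affineN a b u : - affine a b u = affine (- a) (- b) u.
Proof. by rewrite -mulN1r affineZ scaleN1r mulN1r. Qed.

Lemma max_affine_ext F G : F =1 G -> max_affine F -> max_affine G.
Proof.
move=> FG [K [A [B hF]]]; exists K, A, B => u.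
by rewrite -FG; apply: hF.
Qed.

Lemma max_affine_affine a b : max_affine (affine a b).
Proof. by exists unit, (fun=> a), (fun=> b) => u; split=> //; exists tt. Qed.

Lemma max_affineD F G :
  max_affine F -> max_affine G -> max_affine (fun u => F u + G u).
Proof.
move=> [K1 [A1 [B1 hF]]] [K2 [A2 [B2 hG]]].
exists (K1 * K2)%type, (fun k => A1 k.1 + A2 k.2), (fun k => B1 k.1 + B2 k.2).
move=> u; have [leF [k1 Fk1]] := hF u; have [leG [k2 Gk2]] := hG u.
split=> [k|]; first by rewrite -affineD lerD.
by exists (k1, k2); rewrite Fk1 Gk2 affineD.
Qed.

Lemma max_affineZ c F : 0 <= c -> max_affine F -> max_affine (fun u => c * F u).
Proof.
move=> c_ge0 [K [A [B hF]]]; exists K, (fun k => c *: A k), (fun k => c * B k).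
move=> u; have [leF [k Fk]] := hF u.
split=> [k'|]; first by rewrite -affineZ ler_wpM2l.
by exists k; rewrite Fk affineZ.
Qed.

Lemma max_affine_norm a b : max_affine (fun u => `|affine a b u|).
Proof.
exists bool, (fun s => if s then a else - a), (fun s => if s then b else - b).
move=> u; split=> [[]|]; rewrite -?affineN ?ler_norm ?ler_normr ?lexx ?orbT //.
case: (ger0P (affine a b u)) => _; first by exists true.
by exists false; rewrite -affineN.
Qed.

Lemma max_affine_sum (I : Type) (s : seq I) (F : I -> 'rV[R]_d -> R) :
  (forall i, max_affine (F i)) -> max_affine (fun u => \sum_(i <- s) F i u).
Proof.
move=> hF; elim: s => [|i s IH].
  apply: (@max_affine_ext (affine 0 0)); last exact: max_affine_affine.
  by move=> u; rewrite big_nil /affine big1 ?addr0 // => j _; rewrite mxE mul0r.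
apply: (max_affine_ext _ (max_affineD (hF i) IH)).
by move=> u; rewrite big_cons.
Qed.

Lemma polyhedral_max_affine (Y : finType) (L : 'rV[R]_d -> Y -> R) :
  (forall y, max_affine (L^~ y)) -> polyhedral L.
Proof.
move=> hL y; have [K [A [B hK]]] := hL y.
have [_ [k0 _]] := hK 0.
have cardK : #|K| = #|K|.-1.+1 by rewrite prednK // (cardD1 k0).
pose e i := nth k0 (enum K) i.
exists #|K|.-1, (fun i => A (e i)), (fun i => B (e i)) => u.
have [leL [k Lk]] := hK u; split=> [i|]; first exact: leL.
have k_lt : (index k (enum K) < #|K|.-1.+1)%N.
  by rewrite -cardK cardE index_mem mem_enum.
by exists (inord (index k (enum K))); rewrite /e inordK // nth_index ?mem_enum.
Qed.

End MaxAffine.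

Lemma row_delta_inj (R : nzRingType) (d : nat) :
  injective (fun k : 'I_d => delta_mx 0 k : 'rV[R]_d).
Proof.
move=> k1 k2 /(congr1 (fun v : 'rV[R]_d => v 0 k1)).
rewrite !mxE !eqxx /=; case: eqP => // _ /eqP.
by rewrite oner_eq0.
Qed.

Section Penalty.
Variables (R : realType) (d : nat).
Implicit Types (u : 'rV[R]_d) (m M : R).

Definition penalty u : R :=
  \sum_(j < d) (`|u 0 j| - u 0 j) + `|1 - \sum_(j < d) u 0 j|.

Lemma sum_delta_mul k (a : 'I_d -> R) :
  \sum_(j < d) (delta_mx 0 k : 'rV[R]_d) 0 j * a j = a k.
Proof.
rewrite (bigD1 k) //= big1 => [|j /negbTE jk]; last by rewrite mxE jk mul0r.
by rewrite mxE !eqxx mul1r addr0.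
Qed.

Lemma penalty_delta k : penalty (delta_mx 0 k) = 0.
Proof.
rewrite /penalty big1 => [|j _]; last by rewrite mxE ger0_norm ?subrr.
have := sum_delta_mul k (fun=> 1); under eq_bigr do rewrite mulr1.
by move=> ->; rewrite subrr normr0 addr0.
Qed.

Lemma max_affine_penalty : max_affine penalty.
Proof.
have coordE j u : u 0 j = affine (delta_mx 0 j) 0 u.
  by rewrite /affine addr0 sum_delta_mul.
have totalE u : 1 - \sum_(j < d) u 0 j = affine (- const_mx 1) 1 u.
  rewrite /affine addrC; congr (_ + _); rewrite -sumrN.
  by apply: eq_bigr => j _; rewrite !mxE mulN1r.
apply: max_affineD; last first.
  apply: (@max_affine_ext _ _ (fun u => `|affine (- const_mx 1) 1 u|)).
    by move=> u; rewrite totalE.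
  exact: max_affine_norm.
apply: max_affine_sum => j.
apply: (@max_affine_ext _ _ (fun u => `|affine (delta_mx 0 j) 0 u|
                                       + affine (- delta_mx 0 j) 0 u)).
  move=> u; have := affineN (delta_mx 0 j) 0 u.
  by rewrite oppr0 => <-; rewrite -coordE.
by apply: max_affineD; [apply: max_affine_norm | apply: max_affine_affine].
Qed.

(* On the simplex the penalty vanishes and the claim is a convex-combination
   bound; a coordinate u_j < 0 costs at most M |u_j| in the linear part but
   the penalty charges 2 M |u_j| for it, and |1 - sum_j u_j| pays for the
   missing mass. *)
Lemma penalty_bound (a : 'I_d -> R) m M u :
  0 <= m -> m <= M -> (forall j, m <= a j <= M) ->
  m <= \sum_(j < d) u 0 j * a j + M * penalty u.
Proof.
move=> m_ge0 mM a_bd.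
have coord_bd j : m * u 0 j - M * (`|u 0 j| - u 0 j) <= u 0 j * a j.
  have /andP[ma aM] := a_bd j.
  by case: (ger0P (u 0 j)) => uj; nra.
have : \sum_(j < d) (m * u 0 j - M * (`|u 0 j| - u 0 j))
       <= \sum_(j < d) u 0 j * a j by apply: ler_sum => j _.
rewrite big_split /= sumrN -!mulr_sumr /penalty mulrDr.
set s := \sum_(j < d) u 0 j.
have : m * (1 - s) <= M * `|1 - s|.
  by rewrite (le_trans (ler_wpM2l m_ge0 (ler_norm _))) ?ler_wpM2r.
lra.
Qed.

End Penalty.

Section ExpectedLoss.
Variables (R : realType) (Y : finType).
Implicit Types (p : Y -> R) (M : R).

Lemma exp_loss_ge0 (A : Type) (L : A -> Y -> R) p a :
  nonneg_loss L -> simplex p -> 0 <= exp_loss L p a.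
Proof. by move=> L_ge0 [p_ge0 _]; apply: sumr_ge0 => y _; apply: mulr_ge0. Qed.

Lemma exp_loss_le (A : Type) (L : A -> Y -> R) p a M :
  (forall y, L a y <= M) -> simplex p -> exp_loss L p a <= M.
Proof.
move=> L_le [p_ge0 p_sum1]; rewrite -[leRHS]mul1r -p_sum1 mulr_suml.
by apply: ler_sum => y _; apply: ler_wpM2l.
Qed.

Lemma minimizable_fin (A : finType) (a0 : A) (L : A -> Y -> R) : minimizable L.
Proof.
move=> p _; have [a _ min_a] := @arg_minP _ R A a0 predT (exp_loss L p) isT.
by exists a => a'; apply: min_a.
Qed.

Lemma prop_comp (A B : Type) (L : B -> Y -> R) (g : A -> B) (h : B -> A) p b :
  cancel h g -> prop (fun a => L (g a)) p (h b) <-> prop L p b.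
Proof.
move=> hK; split=> [min_hb b'|min_b a].
  by have := min_hb (h b'); rewrite /exp_loss !hK.
by rewrite /prop /exp_loss hK; apply: min_b.
Qed.

End ExpectedLoss.

Section Embedding.
Variables (R : realType) (Y : finType) (d : nat) (f : 'I_d -> Y -> R) (M : R).
Hypotheses (f_ge0 : nonneg_loss f) (f_le : forall j y, f j y <= M).
Hypothesis M_ge0 : 0 <= M.
Implicit Types (u : 'rV[R]_d) (p : Y -> R).

Definition embed_loss u y : R := \sum_(j < d) u 0 j * f j y + M * penalty u.

Lemma embed_loss_ge0 : nonneg_loss embed_loss.
Proof. by move=> u y; apply: penalty_bound => // j; rewrite f_ge0 f_le. Qed.

Lemma polyhedral_embed_loss : polyhedral embed_loss.
Proof.
apply: polyhedral_max_affine => y; apply: max_affineD; last first.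
  exact: max_affineZ (max_affine_penalty R d).
apply: (@max_affine_ext _ _ (affine (\row_j f j y) 0)).
  by move=> u; rewrite /affine addr0; apply: eq_bigr => j _; rewrite mxE mulrC.
exact: max_affine_affine.
Qed.

Lemma embed_loss_delta j : embed_loss (delta_mx 0 j) = f j.
Proof.
apply: functional_extensionality => y.
by rewrite /embed_loss sum_delta_mul penalty_delta mulr0 addr0.
Qed.

Lemma exp_loss_embed_loss p u : simplex p ->
  exp_loss embed_loss p u = \sum_(j < d) u 0 j * exp_loss f p j + M * penalty u.
Proof.
move=> [_ p_sum1]; rewrite /exp_loss /embed_loss.
under eq_bigr do rewrite mulrDr.
rewrite big_split /= -mulr_suml p_sum1 mul1r; congr (_ + _).
under eq_bigr do rewrite mulr_sumr.
rewrite exchange_big /=; apply: eq_bigr => j _; rewrite mulr_sumr.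
by apply: eq_bigr => y _; rewrite mulrCA.
Qed.

Lemma prop_embed_loss_delta p j : simplex p ->
  prop embed_loss p (delta_mx 0 j) <-> prop f p j.
Proof.
move=> p_simplex.
have deltaE j' : exp_loss embed_loss p (delta_mx 0 j') = exp_loss f p j'.
  by rewrite /exp_loss embed_loss_delta.
split=> [min_j j'|min_j u]; first by rewrite -!deltaE.
rewrite deltaE exp_loss_embed_loss //; apply: penalty_bound => [||j'].
- exact: exp_loss_ge0.
- exact: exp_loss_le.
- by rewrite min_j exp_loss_le.
Qed.

Lemma minimizable_embed_loss : minimizable f -> minimizable embed_loss.
Proof.
move=> f_min p p_simplex; have [j min_j] := f_min p p_simplex.
by exists (delta_mx 0 j); apply/prop_embed_loss_delta.
Qed.

End Embedding.

Theorem theorem4 (R : realType) (Y : finType) (Rep : finType) (r0 : Rep)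
    (l : Rep -> Y -> R) (hl : nonneg_loss l) :
  exists (d : nat) (L : 'rV[R]_d -> Y -> R),
    nonneg_loss L /\ polyhedral L /\ embeds L l.
Proof.
pose M := \sum_(r : Rep) \sum_(y : Y) l r y.
pose f (j : 'I_#|Rep|) := l (enum_val j).
have l_le r y : l r y <= M.
  rewrite /M (bigD1 r) //= (bigD1 y) //= -addrA lerDl.
  by rewrite addr_ge0 // sumr_ge0 // => r' _; rewrite sumr_ge0.
have M_ge0 : 0 <= M by rewrite sumr_ge0 // => r _; rewrite sumr_ge0.
have f_ge0 : nonneg_loss f by move=> j; apply: hl.
have f_le j y : f j y <= M by apply: l_le.
exists #|Rep|, (embed_loss f M); split; first exact: embed_loss_ge0.
split; first exact: polyhedral_embed_loss.
split; first exact/minimizable_embed_loss/(minimizable_fin (enum_rank r0)).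
exists (fun=> True), (fun r => delta_mx 0 (enum_rank r)); split.
  by move=> p /(minimizable_fin r0 l)[r min_r]; exists r.
split; first by move=> r1 r2 _ _ /row_delta_inj/enum_rank_inj.
split; first by move=> r _; rewrite embed_loss_delta /f enum_rankK.
move=> p r p_simplex _.
rewrite prop_embed_loss_delta //; apply: iff_sym.
exact: prop_comp (@enum_rankK Rep).
Qed.
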